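(* Let $A=(V_\exists,V_\forall,E,E_f)$ be a fair game arena and $\alpha$ an $\omega$-regular winning condition over $V$. For every $v\in V$, if $$\exists s\in\Sigma.\,\forall t\in\Pi.\,\mathsf{fair}_\exists(\mathsf{play}_v(s,t))\wedge\big(\mathsf{fair}_\forall(\mathsf{play}_v(s,t))\Rightarrow\mathsf{play}_v(s,t)\in\alpha\big)$$ holds, then $$\exists s\in\Sigma.\,\forall t\in\Pi.\,\mathsf{fair}_\forall(\mathsf{play}_v(s,t))\Rightarrow\big(\mathsf{fair}_\exists(\mathsf{play}_v(s,t))\wedge\mathsf{play}_v(s,t)\in\alpha\big)$$ holds. Moreover, the converse fails in general: there exist a fair game arena, an $\omega$-regular condition $\alpha$ and a node $v$ satisfying the second formula but not the first.
   Context: A fair game arena $A=(V_\exists,V_\forall,E,E_f)$: finite node set $V=V_\exists\cup V_\forall$ (disjoint), right-total moves $E\subseteq V\times V$, fair moves $E_f\subseteq E$. A play is an infinite sequence $\tau=v_0v_1\ldots$ with $(v_j,v_{j+1})\in E$; $\tau_m$ is its sequence of moves; $\mathsf{Inf}$ denotes the set of elements occurring infinitely often. For $i\in\{\exists,\forall\}$, $\tau$ is $i$-fair ($\mathsf{fair}_i(\tau)$) if for all $u\in V_i\cap\mathsf{Inf}(\tau)$, every $(u,u')\in E_f$ is in $\mathsf{Inf}(\tau_m)$. A strategy for player $i$ is a function $p:V^*\cdot V_i\to V$ with $p(w\cdot u)\in E(u)$; $\Sigma$ ($\Pi$) is the set of strategies of $\exists$ ($\forall$); $\mathsf{play}_v(s,t)$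 is the unique play from $v$ compliant with $s$ and $t$. An $\omega$-regular winning condition is an $\omega$-regular language $\alpha\subseteq V^\omega$. *)

From mathcomp Require Import all_boot.
Set Implicit Arguments. Unset Strict Implicit. Unset Printing Implicit Defensive.

(* Fair game arena A = (V_exists, V_forall, E, E_f) over a finite node set V.
   [owner u = true] means u \in V_exists, [owner u = false] means u \in V_forall
   (so the two sets partition V). *)
Record arena := Arena {
  node : finType;
  owner : node -> bool;
  edge : rel node;
  fedge : rel node;
  edge_total : forall u, exists w, edge u w;
  fedge_sub : forall u w, fedge u w -> edge u w
}.

Definition Pexists : bool := true.
Definition Pforall : bool := false.

Definition trace (A : arena) := nat -> node A.

Definition is_play (A : arena) (tau : trace A) : Prop :=
  forall j, edge (tau j) (tau j.+1).

Definition inf_node (A : arena) (tau : trace A) (u : node A) : Prop :=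
  forall n, exists2 m, n <= m & tau m = u.

Definition inf_move (A : arena) (tau : trace A) (u u' : node A) : Prop :=
  forall n, exists2 m, n <= m & tau m = u /\ tau m.+1 = u'.

Definition fair (A : arena) (i : bool) (tau : trace A) : Prop :=
  forall u, owner u = i -> inf_node tau u ->
    forall u', fedge u u' -> inf_move tau u u'.

(* A strategy of player i : V^* . V_i -> V, represented as a function of the
   history (w, u) (prefix w, current node u), whose value is only constrained
   (to be an E-successor of u) when u \in V_i. *)
Definition strategy (A : arena) (i : bool) :=
  { p : seq (node A) -> node A -> node A |
    forall w u, owner u = i -> edge u (p w u) }.

Section Play.
Variables (A : arena) (v : node A) (s : strategy A Pexists) (t : strategy A Pforall).

Definition next_move (w : seq (node A)) (u : node A) : node A :=
  if owner u then sval s w u else sval t w u.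

Fixpoint history (n : nat) : seq (node A) * node A :=
  match n with
  | 0 => ([::], v)
  | n'.+1 => let: (w, u) := history n' in (rcons w u, next_move w u)
  end.

Definition play : trace A := fun n => (history n).2.
End Play.

Record buchi (V : finType) := Buchi {
  bstate : finType;
  binit : pred bstate;
  bdelta : bstate -> V -> bstate -> bool;
  bacc : pred bstate
}.

Definition buchi_accepts (V : finType) (B : buchi V) (tau : nat -> V) : Prop :=
  exists run : nat -> bstate B,
    [/\ binit (run 0),
        forall n, bdelta (run n) (tau n) (run n.+1)
      & forall n, exists2 m, n <= m & bacc (run m)].

Definition omega_regular (V : finType) (alpha : (nat -> V) -> Prop) : Prop :=
  exists B : buchi V, forall tau, alpha tau <-> buchi_accepts B tau.

Definition formula1 (A : arena) (alpha : trace A -> Prop) (v : node A) : Prop :=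
  exists s : strategy A Pexists, forall t : strategy A Pforall,
    fair Pexists (play v s t) /\
    (fair Pforall (play v s t) -> alpha (play v s t)).

Definition formula2 (A : arena) (alpha : trace A -> Prop) (v : node A) : Prop :=
  exists s : strategy A Pexists, forall t : strategy A Pforall,
    fair Pforall (play v s t) ->
    (fair Pexists (play v s t) /\ alpha (play v s t)).

From mathcomp Require Import all_boot.
Set Implicit Arguments. Unset Strict Implicit. Unset Printing Implicit Defensive.

(* Formula 1 implies formula 2 strategy by strategy: a play that is
   exists-fair and satisfies (forall-fair -> alpha) also satisfies
   (forall-fair -> exists-fair /\ alpha).
   For the converse take the arena where forall owns X, Y, B and exists owns
   E, with moves X -> E | Y, E -> X | B, Y -> X, B -> X, fair moves X -> Y and
   E -> B, and let alpha say that B is never visited before Y.  For formula 2,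
   exists moves E -> B only once Y has been visited: a forall-fair play visits
   Y, and from then on exists is fair at no risk.  Formula 1 fails: exists must
   be fair even against the forall strategy that never moves X -> Y, so at
   some step N it moves E -> B; the forall strategy that plays the same way up
   to step N and then always moves X -> Y is forall-fair, and its play reaches
   B before any Y. *)

Lemma formula2_of_formula1 (A : arena) (alpha : trace A -> Prop) (v : node A) :
  formula1 alpha v -> formula2 alpha v.
Proof.
case=> s win; exists s => t fair_t.
by have [fair_s alpha_t] := win t; split; last exact: alpha_t.
Qed.

Section Plays.
Variables (A : arena) (v : node A) (s : strategy A Pexists).

Lemma history_mkseq (t : strategy A Pforall) n :
  history v s t n = (mkseq (play v s t) n, play v s t n).
Proof.
elim: n => [|n IH] //; rewrite /play /= IH /= mkseqS.
by case: (history v s t n) IH => w u [-> ->].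
Qed.

Lemma playS (t : strategy A Pforall) n :
  play v s t n.+1 = next_move s t (mkseq (play v s t) n) (play v s t n).
Proof. by rewrite {1}/play /= history_mkseq. Qed.

Lemma play_edge (t : strategy A Pforall) : is_play (play v s t).
Proof.
move=> n; rewrite playS /next_move; case: ifP => owned.
- exact: (svalP s).
- exact: (svalP t).
Qed.

Lemma eq_history (t t' : strategy A Pforall) K :
  (forall w u, size w < K -> sval t w u = sval t' w u) ->
  forall n, n <= K -> history v s t n = history v s t' n.
Proof.
move=> eq_t; elim=> [|n IH] lt_nK //=.
rewrite -IH ?(ltnW lt_nK) //; case hist_n: (history v s t n) => [w u].
have size_w : size w = n.
  by have := history_mkseq t n; rewrite hist_n => -[-> _]; rewrite size_mkseq.
by rewrite /next_move; case: (owner u); rewrite // eq_t ?size_w.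
Qed.

End Plays.

Lemma inf_move_eventually (A : arena) (tau : trace A) (u u' : node A) N :
  (forall m, N <= m -> tau m = u -> tau m.+1 = u') ->
  inf_node tau u -> inf_move tau u u'.
Proof.
move=> step inf_u n; have [m le_m tau_m] := inf_u (maxn n N).
exists m; first exact: leq_trans (leq_maxl n N) le_m.
by split; last apply: step; rewrite ?(leq_trans (leq_maxr n N)).
Qed.

Lemma mem_mkseq_leq (T : eqType) (f : nat -> T) x n m :
  n <= m -> x \in mkseq f n -> x \in mkseq f m.
Proof.
move=> le_nm /mapP[i]; rewrite mem_iota add0n => /andP[_ lt_in] ->.
by apply: map_f; rewrite mem_iota add0n (leq_trans lt_in).
Qed.

Definition nX : 'I_4 := @Ordinal 4 0 isT.
Definition nE : 'I_4 := @Ordinal 4 1 isT.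
Definition nY : 'I_4 := @Ordinal 4 2 isT.
Definition nB : 'I_4 := @Ordinal 4 3 isT.

Lemma ord4P (u : 'I_4) : [\/ u = nX, u = nE, u = nY | u = nB].
Proof.
case: u => [[|[|[|[|m]]]] lt_u4] //.
- by apply: Or41; apply: val_inj.
- by apply: Or42; apply: val_inj.
- by apply: Or43; apply: val_inj.
- by apply: Or44; apply: val_inj.
Qed.

Definition ex_owner (u : 'I_4) : bool := u == nE.

Definition ex_edge : rel 'I_4 := fun u w =>
  if u == nX then (w == nE) || (w == nY)
  else if u == nE then (w == nX) || (w == nB)
  else w == nX.

Definition ex_fedge : rel 'I_4 := fun u w =>
  ((u == nX) && (w == nY)) || ((u == nE) && (w == nB)).

Lemma ex_edge_total u : exists w, ex_edge u w.
Proof.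
by case: (ord4P u) => ->; [exists nE | exists nX | exists nX | exists nX].
Qed.

Lemma ex_fedge_sub u w : ex_fedge u w -> ex_edge u w.
Proof. by case/orP => /andP[/eqP -> /eqP ->]. Qed.

Definition ex_arena : arena := Arena ex_owner ex_edge_total ex_fedge_sub.

Lemma ex_edge_from_E w : ex_edge nE w -> w = nX \/ w = nB.
Proof. by case: (ord4P w) => ->; auto. Qed.

Lemma ex_edge_to_Y u : ex_edge u nY -> u = nX.
Proof. by case: (ord4P u) => ->. Qed.

Lemma ex_edge_to_B u : ex_edge u nB -> u = nE.
Proof. by case: (ord4P u) => ->. Qed.

Lemma ex_play_inf_X (tau : trace ex_arena) : is_play tau -> inf_node tau nX.
Proof.
move=> tau_play n.
have back_to_X k : tau k = nY \/ tau k = nB -> tau k.+1 = nX.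
  move=> tau_k; have := tau_play k.
  by case: tau_k => ->; case: (ord4P (tau k.+1)) => ->.
case: (ord4P (tau n)) => tau_n; first by exists n.
- have := tau_play n; rewrite tau_n => /ex_edge_from_E[X_n1 | B_n1].
    by exists n.+1.
  by exists n.+2; [rewrite leqW | apply: back_to_X; right].
- by exists n.+1; last by apply: back_to_X; left.
- by exists n.+1; last by apply: back_to_X; right.
Qed.

Lemma ex_fair_exists (tau : trace ex_arena) :
  (inf_node tau nE -> inf_move tau nE nB) -> fair Pexists tau.
Proof. by move=> fair_E u /eqP -> inf_E u' /= /eqP ->; exact: fair_E. Qed.

Lemma ex_fair_forall (tau : trace ex_arena) :
  (inf_node tau nX -> inf_move tau nX nY) -> fair Pforall tau.
Proof.
move=> fair_X u owned inf_u u' /orP[/andP[/eqP u_X /eqP u'_Y] | /andP[u_E _]].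
  by rewrite u_X u'_Y; apply: fair_X; rewrite -u_X.
by rewrite /= /ex_owner u_E in owned.
Qed.

Definition Y_before_B (tau : trace ex_arena) : Prop :=
  forall n, tau n = nB -> nY \in mkseq tau n.

Definition ex_buchi_step (q : bool) (a : 'I_4) (q' : bool) : bool :=
  (q' == q || (a == nY)) && ~~ ((a == nB) && ~~ q).

Definition ex_buchi : buchi 'I_4 := Buchi (fun q => ~~ q) ex_buchi_step predT.

Lemma omega_regular_Y_before_B : omega_regular Y_before_B.
Proof.
exists ex_buchi => tau; split=> [Y_B | [run [run0 run_step _]] n B_n].
  exists (fun n => nY \in mkseq tau n); split=> // n; last by exists n.
  rewrite /= /ex_buchi_step mkseqS mem_rcons inE orbC (eq_sym nY) eqxx /=.
  by case: eqP => //= /Y_B ->.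
have run_seen k : run k = (nY \in mkseq tau k).
  elim: k => [|k IH]; first exact/negbTE.
  have /andP[/eqP -> _] := run_step k.
  by rewrite IH mkseqS mem_rcons inE orbC (eq_sym nY).
have := run_step n; rewrite /= /ex_buchi_step B_n eqxx !run_seen.
by case: (nY \in mkseq tau n); rewrite ?andbF.
Qed.

Definition wait_for_Y (w : seq 'I_4) (u : 'I_4) : 'I_4 :=
  if nY \in w then nB else nX.

Lemma wait_for_Y_edge w u : ex_owner u = Pexists -> ex_edge u (wait_for_Y w u).
Proof. by move/eqP ->; rewrite /wait_for_Y; case: ifP. Qed.

Definition wait_for_Y_strategy : strategy ex_arena Pexists :=
  exist _ wait_for_Y wait_for_Y_edge.

Lemma ex_formula2 : formula2 Y_before_B (nX : node ex_arena).
Proof.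
exists wait_for_Y_strategy => t fair_t.
set tau := play _ _ t.
have step_E k : tau k = nE -> tau k.+1 = if nY \in mkseq tau k then nB else nX.
  by move=> E_k; rewrite /tau playS -/tau E_k.
have tau_play : is_play tau := play_edge _ _ t.
split.
- apply: ex_fair_exists => inf_E.
  have [m _ [_ Y_m1]] := fair_t nX erefl (ex_play_inf_X tau_play) nY isT 0.
  apply: (@inf_move_eventually _ _ _ _ m.+2 _ inf_E) => k le_k E_k.
  rewrite step_E // (mem_mkseq_leq le_k) //.
  by rewrite mkseqS mem_rcons inE /tau Y_m1 eqxx.
- case=> [|k] //= B_k1.
  have /ex_edge_to_B E_k : ex_edge (tau k) nB by rewrite -B_k1; exact: tau_play.
  move: B_k1; rewrite -/tau step_E //; case: ifP => // seen_k _.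
  by apply: mem_mkseq_leq seen_k.
Qed.

Definition visit_Y_when (b : pred nat) (w : seq 'I_4) (u : 'I_4) : 'I_4 :=
  if u == nX then (if b (size w) then nY else nE) else nX.

Lemma visit_Y_when_edge b w u :
  ex_owner u = Pforall -> ex_edge u (visit_Y_when b w u).
Proof. by rewrite /visit_Y_when; case: (ord4P u) => -> //=; case: ifP. Qed.

Definition visit_Y_when_strategy b : strategy ex_arena Pforall :=
  exist _ (visit_Y_when b) (@visit_Y_when_edge b).

Section VisitYWhen.
Variable s : strategy ex_arena Pexists.

Lemma play_visit_Y_when_X b k :
  play (nX : node ex_arena) s (visit_Y_when_strategy b) k = nX ->
  play (nX : node ex_arena) s (visit_Y_when_strategy b) k.+1 =
    if b k then nY else nE.
Proof.
by move=> X_k; rewrite playS X_k /next_move /= /visit_Y_when size_mkseq.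
Qed.

Lemma play_never_Y k :
  play (nX : node ex_arena) s (visit_Y_when_strategy pred0) k != nY.
Proof.
case: k => [|k] //; apply/eqP => Y_k1.
have := @play_edge ex_arena nX s (visit_Y_when_strategy pred0) k.
rewrite Y_k1 => /ex_edge_to_Y X_k.
by move: Y_k1; rewrite play_visit_Y_when_X.
Qed.

Lemma play_never_inf_E :
  inf_node (play (nX : node ex_arena) s (visit_Y_when_strategy pred0)) nE.
Proof.
have tau_play := @play_edge ex_arena nX s (visit_Y_when_strategy pred0).
move=> n; have [m le_m X_m] := ex_play_inf_X tau_play n.
by exists m.+1; [rewrite leqW | rewrite play_visit_Y_when_X].
Qed.

End VisitYWhen.

Lemma ex_not_formula1 : ~ formula1 Y_before_B (nX : node ex_arena).
Proof.
case=> s win.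
pose never := visit_Y_when_strategy pred0.
have [N _ [_ B_N1]] := (win never).1 nE erefl (play_never_inf_E s) nB isT 0.
pose late := visit_Y_when_strategy (leq N.+1).
pose tauN := @play ex_arena nX s late.
have agree w u : size w < N.+1 -> sval late w u = sval never w u.
  by move=> lt_w; rewrite /= /visit_Y_when leqNgt lt_w.
have := @eq_history ex_arena nX s late never N.+1 agree N.+1 (leqnn _).
rewrite !history_mkseq => /pair_equal_spec[prefix_eq B_tauN].
rewrite B_N1 in B_tauN.
have fair_late : fair Pforall tauN.
  apply: ex_fair_forall => inf_X.
  apply: (@inf_move_eventually _ _ _ _ N.+1 _ inf_X) => k le_k X_k.
  by rewrite /tauN /late play_visit_Y_when_X // le_k.
have := (win late).2 fair_late N.+1 B_tauN; rewrite prefix_eq.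
by case/mapP => k _ Y_k; have := play_never_Y s k; rewrite -Y_k eqxx.
Qed.

Theorem lemma4 :
  (forall (A : arena) (alpha : trace A -> Prop) (v : node A),
      omega_regular alpha -> formula1 alpha v -> formula2 alpha v) /\
  (exists (A : arena) (alpha : trace A -> Prop) (v : node A),
      [/\ omega_regular alpha, formula2 alpha v & ~ formula1 alpha v]).
Proof.
split=> [A alpha v _ | ]; first exact: formula2_of_formula1.
exists ex_arena, Y_before_B, nX; split.
- exact: omega_regular_Y_before_B.
- exact: ex_formula2.
- exact: ex_not_formula1.
Qed.
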